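(* Let $S$ be a Stone relation algebra and $x,y,z\in S$. Then: 1. $x$ is an ideal if and only if $\top x\top=x$. 2. If $x$ and $z$ are vectors, then $x^{\smile}yz$ is an ideal. 3. The set $\mathrm{I}(S)$ of ideals is closed under $\cdot$, $\sqcup$, $\sqcap$, converse and pseudocomplement. 4. $\bot$ and $\top$ are ideals. 5. If $x$ and $y$ are ideals, then $xy=x\sqcap y$. 6. $\mathrm{I}(S)$, with $\sqcup,\sqcap$, pseudocomplement, converse, $\bot,\top$ restricted from $S$, with $\sqcap$ as composition and $\top$ as identity, is a Stone relation algebra. 7. If $x$ is an ideal, then $x=x^{\smile}$. 8. If $x$ is an ideal, then $yz\sqcap x=(y\sqcap x)(z\sqcap x)$.
   Context: A Stone relation algebra is a structure $(S,\sqcup,\sqcap,\cdot,\overline{\,\cdot\,},{}^{\smile},\bot,\top,1)$ (write $xy$ for $x\cdot y$, $\overline{x}$ for the pseudocomplement, $x^{\smile}$ for the converse) such that: $(S,\sqcup,\sqcap,\bot,\top)$ is a bounded distributive lattice with order $x\sqsubseteq y\iff x\sqcup y=y$; $x\sqcap y=\bot\iff x\sqsubseteq\overline{y}$; $\overline{x}\sqcup\overline{\overline{x}}=\top$; $\cdot$ is associative with two-sided unit $1$, distributes over $\sqcup$ on both sides, and $\bot$ is a zero of $\cdot$; $x^{\smile\smile}=x$, $(xy)^{\smile}=y^{\smile}x^{\smile}$, $(x\sqcup y)^{\smile}=x^{\smile}\sqcup y^{\smile}$; $\overline{\overline{1}}=1$; $\overline{\overline{xy}}=\overline{\overline{x}}\,\overline{\overline{y}}$;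 $xy\sqcap z\sqsubseteq x(y\sqcap x^{\smile}z)$. $x$ is a vector if $x\top=x$, a covector if $\top x=x$, and an ideal if it is both a vector and a covector. *)

Set Implicit Arguments.

(* With P := fun _ => True this is exactly the definition of a Stone relation
   algebra on T; with general P it says that P, with the restricted
   operations, forms a Stone relation algebra. *)
Definition StoneRA_on (T : Type) (P : T -> Prop)
  (join meet comp : T -> T -> T) (pc conv : T -> T) (bot top one : T) : Prop :=
  let le x y := join x y = y in
  (forall x y, P x -> P y -> P (join x y)) /\
  (forall x y, P x -> P y -> P (meet x y)) /\
  (forall x y, P x -> P y -> P (comp x y)) /\
  (forall x, P x -> P (pc x)) /\
  (forall x, P x -> P (conv x)) /\
  P bot /\ P top /\ P one /\
  (forall x y z, P x -> P y -> P z -> join x (join y z) = join (join x y) z) /\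
  (forall x y z, P x -> P y -> P z -> meet x (meet y z) = meet (meet x y) z) /\
  (forall x y, P x -> P y -> join x y = join y x) /\
  (forall x y, P x -> P y -> meet x y = meet y x) /\
  (forall x, P x -> join x x = x) /\
  (forall x, P x -> meet x x = x) /\
  (forall x y, P x -> P y -> join x (meet x y) = x) /\
  (forall x y, P x -> P y -> meet x (join x y) = x) /\
  (forall x y z, P x -> P y -> P z ->
     meet x (join y z) = join (meet x y) (meet x z)) /\
  (forall x, P x -> join bot x = x) /\
  (forall x, P x -> meet top x = x) /\
  (forall x y, P x -> P y -> (meet x y = bot <-> le x (pc y))) /\
  (forall x, P x -> join (pc x) (pc (pc x)) = top) /\
  (forall x y z, P x -> P y -> P z -> comp x (comp y z) = comp (comp x y) z) /\
  (forall x, P x -> comp one x = x) /\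
  (forall x, P x -> comp x one = x) /\
  (forall x y z, P x -> P y -> P z -> comp x (join y z) = join (comp x y) (comp x z)) /\
  (forall x y z, P x -> P y -> P z -> comp (join x y) z = join (comp x z) (comp y z)) /\
  (forall x, P x -> comp bot x = bot) /\
  (forall x, P x -> comp x bot = bot) /\
  (forall x, P x -> conv (conv x) = x) /\
  (forall x y, P x -> P y -> conv (comp x y) = comp (conv y) (conv x)) /\
  (forall x y, P x -> P y -> conv (join x y) = join (conv x) (conv y)) /\
  pc (pc one) = one /\
  (forall x y, P x -> P y -> pc (pc (comp x y)) = comp (pc (pc x)) (pc (pc y))) /\
  (forall x y z, P x -> P y -> P z ->
     le (meet (comp x y) z) (comp x (meet y (comp (conv x) z)))).

Record StoneRA := {
  carrier :> Type;
  sjoin : carrier -> carrier -> carrier;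
  smeet : carrier -> carrier -> carrier;
  scomp : carrier -> carrier -> carrier;
  spc : carrier -> carrier;
  sconv : carrier -> carrier;
  sbot : carrier;
  stop : carrier;
  sone : carrier;
  stone_axioms : StoneRA_on (fun _ => True) sjoin smeet scomp spc sconv sbot stop sone
}.

Arguments sjoin {s}. Arguments smeet {s}. Arguments scomp {s}.
Arguments spc {s}. Arguments sconv {s}. Arguments sbot {s}.
Arguments stop {s}. Arguments sone {s}.

Definition vector {S : StoneRA} (x : S) : Prop := scomp x stop = x.
Definition covector {S : StoneRA} (x : S) : Prop := scomp stop x = x.
Definition ideal {S : StoneRA} (x : S) : Prop := vector x /\ covector x.

From Stdlib Require Import Setoid.

(* Everything rests on the Dedekind law x·y ⊓ z ⊑ x·(y ⊓ x˘·z).  Taking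
   y := 1 and z := x gives x ⊑ x·x˘·x, so an ideal satisfies x ⊑ ⊤·x˘·⊤ = x˘
   and is symmetric.  For a vector x and a covector y,
   x ⊓ y = x ⊓ ⊤·y ⊑ x·y˘·y ⊑ x·y  (as y˘·y ⊑ ⊤·y = y),
   while x·y ⊑ x ⊓ y is immediate; hence on ideals composition is meet, with
   unit ⊤.  Vectors and covectors are closed under the operations of S (for the
   pseudocomplement, by Dedekind again), so the ideals form a subalgebra on
   which every axiom is inherited from S or reduces to a lattice identity. *)

Section StoneRelationAlgebra.

Variable S : StoneRA.

Local Infix "⊔" := sjoin (at level 50, left associativity).
Local Infix "⊓" := smeet (at level 40, left associativity).
Local Infix "·" := scomp (at level 39, left associativity).
Local Notation "x ˘" := (sconv x) (at level 2, left associativity, format "x ˘").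
Local Notation "⊤" := (@stop S).
Local Notation "⊥" := (@sbot S).
Local Notation "1" := (@sone S).
Local Notation "x ⊑ y" := (x ⊔ y = y) (at level 70).

Ltac stone_axiom :=
  let A := fresh in
  pose proof (stone_axioms S) as A; unfold StoneRA_on in A; cbv beta zeta in A;
  decompose [and] A; clear A; intros; eauto.

Lemma join_assoc (x y z : S) : x ⊔ (y ⊔ z) = x ⊔ y ⊔ z. Proof. stone_axiom. Qed.
Lemma meet_assoc (x y z : S) : x ⊓ (y ⊓ z) = x ⊓ y ⊓ z. Proof. stone_axiom. Qed.
Lemma join_comm (x y : S) : x ⊔ y = y ⊔ x. Proof. stone_axiom. Qed.
Lemma meet_comm (x y : S) : x ⊓ y = y ⊓ x. Proof. stone_axiom. Qed.
Lemma join_idem (x : S) : x ⊔ x = x. Proof. stone_axiom. Qed.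
Lemma meet_idem (x : S) : x ⊓ x = x. Proof. stone_axiom. Qed.
Lemma join_meet_absorb (x y : S) : x ⊔ x ⊓ y = x. Proof. stone_axiom. Qed.
Lemma meet_join_absorb (x y : S) : x ⊓ (x ⊔ y) = x. Proof. stone_axiom. Qed.
Lemma meet_join_distr_l (x y z : S) : x ⊓ (y ⊔ z) = x ⊓ y ⊔ x ⊓ z.
Proof. stone_axiom. Qed.
Lemma join_bot_l (x : S) : ⊥ ⊔ x = x. Proof. stone_axiom. Qed.
Lemma meet_top_l (x : S) : ⊤ ⊓ x = x. Proof. stone_axiom. Qed.
Lemma pc_spec (x y : S) : x ⊓ y = ⊥ <-> x ⊑ spc y. Proof. stone_axiom. Qed.
Lemma join_pc_pcpc (x : S) : spc x ⊔ spc (spc x) = ⊤. Proof. stone_axiom. Qed.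
Lemma comp_assoc (x y z : S) : x · (y · z) = x · y · z. Proof. stone_axiom. Qed.
Lemma comp_one_l (x : S) : 1 · x = x. Proof. stone_axiom. Qed.
Lemma comp_one_r (x : S) : x · 1 = x. Proof. stone_axiom. Qed.
Lemma comp_join_distr_l (x y z : S) : x · (y ⊔ z) = x · y ⊔ x · z.
Proof. stone_axiom. Qed.
Lemma comp_join_distr_r (x y z : S) : (x ⊔ y) · z = x · z ⊔ y · z.
Proof. stone_axiom. Qed.
Lemma comp_bot_l (x : S) : ⊥ · x = ⊥. Proof. stone_axiom. Qed.
Lemma comp_bot_r (x : S) : x · ⊥ = ⊥. Proof. stone_axiom. Qed.
Lemma conv_involutive (x : S) : x˘˘ = x. Proof. stone_axiom. Qed.
Lemma conv_comp (x y : S) : (x · y)˘ = y˘ · x˘. Proof. stone_axiom. Qed.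
Lemma conv_join (x y : S) : (x ⊔ y)˘ = x˘ ⊔ y˘. Proof. stone_axiom. Qed.
Lemma pcpc_comp (x y : S) : spc (spc (x · y)) = spc (spc x) · spc (spc y).
Proof. stone_axiom. Qed.
Lemma dedekind (x y z : S) : x · y ⊓ z ⊑ x · (y ⊓ x˘ · z). Proof. stone_axiom. Qed.

Lemma le_refl (x : S) : x ⊑ x.
Proof. apply join_idem. Qed.

Lemma le_trans (x y z : S) : x ⊑ y -> y ⊑ z -> x ⊑ z.
Proof. intros Hxy Hyz. rewrite <- Hyz, join_assoc, Hxy. reflexivity. Qed.

Lemma le_antisym (x y : S) : x ⊑ y -> y ⊑ x -> x = y.
Proof. intros Hxy Hyx. rewrite <- Hxy, join_comm. symmetry. exact Hyx. Qed.

Lemma le_meet_iff (x y : S) : x ⊑ y <-> x ⊓ y = x.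
Proof.
  split; intro H.
  - rewrite <- H. apply meet_join_absorb.
  - rewrite <- H, join_comm, meet_comm. apply join_meet_absorb.
Qed.

Lemma meet_le_l (x y : S) : x ⊓ y ⊑ x.
Proof. apply le_meet_iff. rewrite meet_comm, meet_assoc, meet_idem. reflexivity. Qed.

Lemma meet_le_r (x y : S) : x ⊓ y ⊑ y.
Proof. rewrite meet_comm. apply meet_le_l. Qed.

Lemma meet_glb (x y z : S) : z ⊑ x -> z ⊑ y -> z ⊑ x ⊓ y.
Proof. rewrite !le_meet_iff. intros Hx Hy. rewrite meet_assoc, Hx, Hy. reflexivity. Qed.

Lemma meet_mono (x y u v : S) : x ⊑ y -> u ⊑ v -> x ⊓ u ⊑ y ⊓ v.
Proof.
  intros Hxy Huv. apply meet_glb.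
  - apply le_trans with x; [apply meet_le_l | exact Hxy].
  - apply le_trans with u; [apply meet_le_r | exact Huv].
Qed.

Lemma le_top (x : S) : x ⊑ ⊤.
Proof. apply le_meet_iff. rewrite meet_comm. apply meet_top_l. Qed.

Lemma le_bot_eq (x : S) : x ⊑ ⊥ -> x = ⊥.
Proof. intro H. apply le_antisym; [exact H | apply join_bot_l]. Qed.

Lemma meet_top_r (x : S) : x ⊓ ⊤ = x.
Proof. rewrite meet_comm. apply meet_top_l. Qed.

Lemma meet_bot_r (x : S) : x ⊓ ⊥ = ⊥.
Proof. apply le_bot_eq, meet_le_r. Qed.

Lemma meet_bot_l (x : S) : ⊥ ⊓ x = ⊥.
Proof. rewrite meet_comm. apply meet_bot_r. Qed.

Lemma meet_join_distr_r (x y z : S) : (x ⊔ y) ⊓ z = x ⊓ z ⊔ y ⊓ z.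
Proof. rewrite !(meet_comm _ z). apply meet_join_distr_l. Qed.

Lemma pc_meet (x : S) : spc x ⊓ x = ⊥.
Proof. apply pc_spec, le_refl. Qed.

Lemma pc_top : spc ⊤ = ⊥.
Proof. rewrite <- (meet_top_r (spc ⊤)). apply pc_meet. Qed.

Lemma pc_bot : spc ⊥ = ⊤.
Proof. apply le_antisym; [apply le_top | apply pc_spec, meet_bot_r]. Qed.

Lemma comp_mono_l (x y z : S) : x ⊑ y -> x · z ⊑ y · z.
Proof. intro H. rewrite <- comp_join_distr_r, H. reflexivity. Qed.

Lemma comp_mono_r (x y z : S) : x ⊑ y -> z · x ⊑ z · y.
Proof. intro H. rewrite <- comp_join_distr_l, H. reflexivity. Qed.

Lemma comp_mono (x y u v : S) : x ⊑ y -> u ⊑ v -> x · u ⊑ y · v.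
Proof.
  intros Hxy Huv. apply le_trans with (y · u); [apply comp_mono_l | apply comp_mono_r];
    assumption.
Qed.

Lemma conv_mono (x y : S) : x ⊑ y -> x˘ ⊑ y˘.
Proof. intro H. rewrite <- conv_join, H. reflexivity. Qed.

Lemma conv_top : ⊤˘ = ⊤.
Proof.
  apply le_antisym; [apply le_top |].
  rewrite <- (conv_involutive ⊤) at 1. apply conv_mono, le_top.
Qed.

Lemma conv_meet (x y : S) : (x ⊓ y)˘ = x˘ ⊓ y˘.
Proof.
  apply le_antisym.
  - apply meet_glb; apply conv_mono; [apply meet_le_l | apply meet_le_r].
  - rewrite <- (conv_involutive (x˘ ⊓ y˘)). apply conv_mono.
    apply meet_glb; [rewrite <- (conv_involutive x) at 2 3 | rewrite <- (conv_involutive y) at 2 3];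
      apply conv_mono; [apply meet_le_l | apply meet_le_r].
Qed.

Lemma dedekind_r (x y z : S) : x · y ⊓ z ⊑ (x ⊓ z · y˘) · y.
Proof.
  rewrite <- (conv_involutive (x · y ⊓ z)), <- (conv_involutive ((x ⊓ z · y˘) · y)).
  apply conv_mono. rewrite conv_meet, !conv_comp, conv_meet, conv_comp, conv_involutive.
  rewrite <- (conv_involutive y) at 3 5. apply dedekind.
Qed.

Lemma le_comp_top (x : S) : x ⊑ x · ⊤.
Proof. rewrite <- (comp_one_r x) at 1. apply comp_mono_r, le_top. Qed.

Lemma le_top_comp (x : S) : x ⊑ ⊤ · x.
Proof. rewrite <- (comp_one_l x) at 1. apply comp_mono_l, le_top. Qed.

Lemma top_comp_top : ⊤ · ⊤ = ⊤.
Proof. apply le_antisym; [apply le_top | apply le_top_comp]. Qed.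

Lemma le_comp_conv_comp (x : S) : x ⊑ x · x˘ · x.
Proof.
  rewrite <- comp_assoc. apply le_trans with (x · 1 ⊓ x).
  - rewrite comp_one_r, meet_idem. apply le_refl.
  - apply le_trans with (x · (1 ⊓ x˘ · x)); [apply dedekind | apply comp_mono_r, meet_le_r].
Qed.

Lemma vector_comp_top_le (x y : S) : vector y -> x ⊑ y -> x · ⊤ ⊑ y.
Proof.
  intros Hy Hxy. apply le_trans with (y · ⊤); [apply comp_mono_l, Hxy |].
  rewrite Hy. apply le_refl.
Qed.

Lemma covector_top_comp_le (x y : S) : covector y -> x ⊑ y -> ⊤ · x ⊑ y.
Proof.
  intros Hy Hxy. apply le_trans with (⊤ · y); [apply comp_mono_r, Hxy |].
  rewrite Hy. apply le_refl.
Qed.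

Lemma vector_comp_le (x y : S) : vector x -> x · y ⊑ x.
Proof.
  intro Hx. apply le_trans with (x · ⊤); [apply comp_mono_r, le_top |].
  apply vector_comp_top_le; [exact Hx | apply le_refl].
Qed.

Lemma covector_comp_le (x y : S) : covector x -> y · x ⊑ x.
Proof.
  intro Hx. apply le_trans with (⊤ · x); [apply comp_mono_l, le_top |].
  apply covector_top_comp_le; [exact Hx | apply le_refl].
Qed.

Lemma vector_conv (x : S) : vector x -> covector x˘.
Proof. unfold vector, covector. intro Hx. rewrite <- conv_top, <- conv_comp, Hx. reflexivity. Qed.

Lemma covector_conv (x : S) : covector x -> vector x˘.
Proof. unfold vector, covector. intro Hx. rewrite <- conv_top, <- conv_comp, Hx. reflexivity. Qed.

Lemma vector_comp (x y : S) : vector y -> vector (x · y).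
Proof. unfold vector. intro Hy. rewrite <- comp_assoc, Hy. reflexivity. Qed.

Lemma covector_comp (x y : S) : covector x -> covector (x · y).
Proof. unfold covector. intro Hx. rewrite comp_assoc, Hx. reflexivity. Qed.

Lemma vector_join (x y : S) : vector x -> vector y -> vector (x ⊔ y).
Proof. unfold vector. intros Hx Hy. rewrite comp_join_distr_r, Hx, Hy. reflexivity. Qed.

Lemma covector_join (x y : S) : covector x -> covector y -> covector (x ⊔ y).
Proof. unfold covector. intros Hx Hy. rewrite comp_join_distr_l, Hx, Hy. reflexivity. Qed.

Lemma vector_meet (x y : S) : vector x -> vector y -> vector (x ⊓ y).
Proof.
  intros Hx Hy. apply le_antisym; [| apply le_comp_top].
  apply meet_glb; [apply vector_comp_top_le, meet_le_l | apply vector_comp_top_le, meet_le_r];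
    assumption.
Qed.

Lemma covector_meet (x y : S) : covector x -> covector y -> covector (x ⊓ y).
Proof.
  intros Hx Hy. apply le_antisym; [| apply le_top_comp].
  apply meet_glb; [apply covector_top_comp_le, meet_le_l | apply covector_top_comp_le, meet_le_r];
    assumption.
Qed.

Lemma vector_pc (x : S) : vector x -> vector (spc x).
Proof.
  intro Hx. apply le_antisym; [| apply le_comp_top].
  apply pc_spec, le_bot_eq.
  apply le_trans with ((spc x ⊓ x · ⊤˘) · ⊤); [apply dedekind_r |].
  rewrite conv_top, Hx, pc_meet, comp_bot_l. apply le_refl.
Qed.

Lemma covector_pc (x : S) : covector x -> covector (spc x).
Proof.
  intro Hx. apply le_antisym; [| apply le_top_comp].
  apply pc_spec, le_bot_eq.
  apply le_trans with (⊤ · (spc x ⊓ ⊤˘ · x)); [apply dedekind |].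
  rewrite conv_top, Hx, pc_meet, comp_bot_r. apply le_refl.
Qed.

Lemma vector_top : vector ⊤.
Proof. apply top_comp_top. Qed.

Lemma covector_top : covector ⊤.
Proof. apply top_comp_top. Qed.

Lemma vector_bot : vector ⊥.
Proof. apply comp_bot_l. Qed.

Lemma covector_bot : covector ⊥.
Proof. apply comp_bot_r. Qed.

Lemma vector_covector_comp_eq_meet (x y : S) : vector x -> covector y -> x · y = x ⊓ y.
Proof.
  intros Hx Hy. apply le_antisym.
  - apply meet_glb; [apply vector_comp_le | apply covector_comp_le]; assumption.
  - rewrite meet_comm. apply le_trans with (⊤ · y ⊓ x); [rewrite Hy; apply le_refl |].
    apply le_trans with ((⊤ ⊓ x · y˘) · y); [apply dedekind_r |].
    rewrite meet_top_l, <- comp_assoc. apply comp_mono_r, covector_comp_le, Hy.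
Qed.

Lemma ideal_iff_top_comp_top (x : S) : ideal x <-> ⊤ · x · ⊤ = x.
Proof.
  split.
  - intros [Hv Hc]. unfold vector, covector in *. rewrite Hc, Hv. reflexivity.
  - intro H. rewrite <- H. split.
    + apply vector_comp, vector_top.
    + apply covector_comp, covector_comp, covector_top.
Qed.

Lemma vector_conv_comp_ideal (x y z : S) : vector x -> vector z -> ideal (x˘ · y · z).
Proof.
  intros Hx Hz. split;
    [apply vector_comp, Hz | apply covector_comp, covector_comp, vector_conv, Hx].
Qed.

Lemma ideal_comp (x y : S) : ideal x -> ideal y -> ideal (x · y).
Proof. intros Hx Hy. split; [apply vector_comp, Hy | apply covector_comp, Hx]. Qed.

Lemma ideal_join (x y : S) : ideal x -> ideal y -> ideal (x ⊔ y).
Proof. intros Hx Hy. split; [apply vector_join | apply covector_join]; apply Hx || apply Hy. Qed.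

Lemma ideal_meet (x y : S) : ideal x -> ideal y -> ideal (x ⊓ y).
Proof. intros Hx Hy. split; [apply vector_meet | apply covector_meet]; apply Hx || apply Hy. Qed.

Lemma ideal_conv (x : S) : ideal x -> ideal x˘.
Proof. intros [Hv Hc]. split; [apply covector_conv, Hc | apply vector_conv, Hv]. Qed.

Lemma ideal_pc (x : S) : ideal x -> ideal (spc x).
Proof. intros [Hv Hc]. split; [apply vector_pc, Hv | apply covector_pc, Hc]. Qed.

Lemma ideal_bot : ideal ⊥.
Proof. split; [apply vector_bot | apply covector_bot]. Qed.

Lemma ideal_top : ideal ⊤.
Proof. split; [apply vector_top | apply covector_top]. Qed.

Lemma ideal_le_conv (x : S) : ideal x -> x ⊑ x˘.
Proof.
  intro Hx. apply le_trans with (x · x˘ · x); [apply le_comp_conv_comp |].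
  apply le_trans with (⊤ · x˘ · ⊤); [apply comp_mono; [apply comp_mono_l |]; apply le_top |].
  rewrite (proj1 (ideal_iff_top_comp_top x˘) (ideal_conv x Hx)). apply le_refl.
Qed.

Lemma ideal_eq_conv (x : S) : ideal x -> x = x˘.
Proof.
  intro Hx. apply le_antisym; [apply ideal_le_conv, Hx |].
  rewrite <- (conv_involutive x) at 2 3. apply conv_mono, ideal_le_conv, Hx.
Qed.

Lemma ideal_meet_comp (x y z : S) : ideal x -> y · z ⊓ x = (y ⊓ x) · (z ⊓ x).
Proof.
  intros [Hv Hc]. apply le_antisym.
  - apply le_trans with (y · (z ⊓ x) ⊓ x).
    + apply meet_glb; [| apply meet_le_r].
      apply le_trans with (y · (z ⊓ y˘ · x)); [apply dedekind |].
      apply comp_mono_r, meet_mono; [apply le_refl | apply covector_comp_le, Hc].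
    + apply le_trans with ((y ⊓ x · (z ⊓ x)˘) · (z ⊓ x)); [apply dedekind_r |].
      apply comp_mono_l, meet_mono; [apply le_refl | apply vector_comp_le, Hv].
  - apply meet_glb; [apply comp_mono; apply meet_le_l |].
    apply le_trans with (x · (z ⊓ x)); [apply comp_mono_l, meet_le_r | apply vector_comp_le, Hv].
Qed.

Lemma ideal_pcpc_meet (x y : S) :
  ideal x -> ideal y -> spc (spc (x ⊓ y)) = spc (spc x) ⊓ spc (spc y).
Proof.
  intros Hx Hy.
  rewrite <- (vector_covector_comp_eq_meet x y (proj1 Hx) (proj2 Hy)), pcpc_comp.
  apply vector_covector_comp_eq_meet;
    [apply vector_pc, vector_pc, Hx | apply covector_pc, covector_pc, Hy].
Qed.

Lemma ideal_StoneRA_on : StoneRA_on (@ideal S) sjoin smeet smeet spc sconv ⊥ ⊤ ⊤.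
Proof.
  assert (pcpc_top : spc (spc ⊤) = ⊤) by (rewrite pc_top; apply pc_bot).
  unfold StoneRA_on; cbv zeta.
  repeat match goal with |- _ /\ _ => split end; intros;
    auto using ideal_join, ideal_meet, ideal_pc, ideal_conv, ideal_bot, ideal_top,
      join_assoc, meet_assoc, join_comm, meet_comm, join_idem, meet_idem,
      join_meet_absorb, meet_join_absorb, meet_join_distr_l, meet_join_distr_r,
      join_bot_l, meet_top_l, meet_top_r, meet_bot_l, meet_bot_r, pc_spec, join_pc_pcpc,
      conv_involutive, conv_join, ideal_pcpc_meet.
  - rewrite conv_meet. apply meet_comm.
  - rewrite <- (ideal_eq_conv x) by assumption.
    repeat apply meet_glb; eauto using le_trans, meet_le_l, meet_le_r.
Qed.

End StoneRelationAlgebra.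

Theorem mainTheorem10 (S : StoneRA) (x y z : S) :
  (* 1 *) (ideal x <-> scomp (scomp stop x) stop = x) /\
  (* 2 *) (vector x -> vector z -> ideal (scomp (scomp (sconv x) y) z)) /\
  (* 3 *) (forall u v : S, ideal u -> ideal v ->
             ideal (scomp u v) /\ ideal (sjoin u v) /\ ideal (smeet u v) /\
             ideal (sconv u) /\ ideal (spc u)) /\
  (* 4 *) (@ideal S sbot /\ @ideal S stop) /\
  (* 5 *) (ideal x -> ideal y -> scomp x y = smeet x y) /\
  (* 6 *) StoneRA_on (@ideal S) sjoin smeet smeet spc sconv sbot stop stop /\
  (* 7 *) (ideal x -> x = sconv x) /\
  (* 8 *) (ideal x -> smeet (scomp y z) x = scomp (smeet y x) (smeet z x)).
Proof.
  split; [apply ideal_iff_top_comp_top |].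
  split; [apply vector_conv_comp_ideal |].
  split.
  { intros u v Hu Hv. repeat match goal with |- _ /\ _ => split end;
      auto using ideal_comp, ideal_join, ideal_meet, ideal_conv, ideal_pc. }
  split; [split; [apply ideal_bot | apply ideal_top] |].
  split; [intros Hx Hy; apply vector_covector_comp_eq_meet; [apply Hx | apply Hy] |].
  split; [apply ideal_StoneRA_on |].
  split; [apply ideal_eq_conv | apply ideal_meet_comp].
Qed.
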